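(* Let $k$ be a commutative ring, and let $A$ and $B$ be Frobenius algebras over $k$ with Frobenius coordinates $(\phi,x_i,y_i)$ and $(\psi,z_j,w_j)$ respectively. Suppose $B$ is a subalgebra of $A$, $A_B$ is projective, and the Nakayama automorphism $\eta_A$ of $A$ satisfies $\eta_A(B)=B$. Then $A/B$ is a $\beta$-Frobenius extension with $\beta=\eta_B\circ\eta_A^{-1}|_B$ (where $\eta_B$ is the Nakayama automorphism of $B$), and a $\beta$-Frobenius homomorphism is given by $F(a)=\sum_j\phi(az_j)w_j$ for $a\in A$; i.e. $a\mapsto F(a\,\cdot)$ is a $B$-$A$-bimodule isomorphism $A\to{}_\beta\mathrm{Hom}_B(A_B,B_B)$.
   Context: Frobenius coordinates $(\phi,x_i,y_i)$ for a $k$-algebra $A$ (finitely generated projective over $k$): $\phi\in\mathrm{Hom}_k(A,k)$ and finitely many $x_i,y_i\in A$ with $\sum_ix_i\phi(y_ia)=a=\sum_i\phi(ax_i)y_i$ for all $a\in A$. The Nakayama automorphism $\eta_A$ (relative to $\phi$) is defined by $\phi(\eta_A(a)x)=\phi(xa)$ for all $a,x\in A$; similarly $\eta_B$ relative to $\psi$. For an automorphism $\beta$ of $B$, $A/B$ is a $\beta$-Frobenius extension if $A_B$ is finitely generated projective and $A\cong{}_\beta\mathrm{Hom}_B(A_B,B_B)$ as $B$-$A$-bimodules, where $(b\cdot\chi\cdot a)(x)=\beta(b)\chi(ax)$. *)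

From HB Require Import structures.
From mathcomp Require Import all_boot all_order all_algebra.
Set Implicit Arguments. Unset Strict Implicit. Unset Printing Implicit Defensive.
Import GRing.Theory.
Local Open Scope ring_scope.

Section FrobDefs.
Variable k : comNzRingType.

Definition klinear_form (A : algType k) (phi : A -> k) : Prop :=
  (forall a a', phi (a + a') = phi a + phi a') /\
  (forall (c : k) a, phi (c *: a) = c * phi a).

Definition frobenius_coords (A : algType k) (phi : A -> k) (n : nat)
    (x y : 'I_n -> A) : Prop :=
  klinear_form phi /\
  (forall a : A, \sum_(i < n) phi (y i * a) *: x i = a) /\
  (forall a : A, \sum_(i < n) phi (a * x i) *: y i = a).

Definition nakayama (A : algType k) (phi : A -> k) (eta : A -> A) : Prop :=
  forall a x : A, phi (eta a * x) = phi (x * a).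

Variables (A B : algType k) (iota : {lrmorphism B -> A}).

(* Elements of Hom_B(A_B, B_B): additive right B-linear maps, where A is a
   right B-module via iota. *)
Definition right_Blinear (f : A -> B) : Prop :=
  (forall a a', f (a + a') = f a + f a') /\
  (forall a b, f (a * iota b) = f a * b).

(* A_B is projective (dual basis characterization, arbitrary index set). *)
Definition right_projective : Prop :=
  exists (I : eqType) (e : I -> A) (f : I -> A -> B),
    (forall i, right_Blinear (f i)) /\
    (forall a, exists s : seq I,
        (forall i, i \notin s -> f i a = 0) /\
        a = \sum_(i <- s) e i * iota (f i a)).

Definition right_fg_projective : Prop :=
  exists (n : nat) (e : 'I_n -> A) (f : 'I_n -> A -> B),
    (forall i, right_Blinear (f i)) /\
    (forall a, a = \sum_(i < n) e i * iota (f i a)).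

Definition kalg_automorphism (beta : B -> B) : Prop :=
  bijective beta /\
  (forall b b', beta (b + b') = beta b + beta b') /\
  (forall b b', beta (b * b') = beta b * beta b') /\
  beta 1 = 1 /\
  (forall (c : k) b, beta (c *: b) = c *: beta b).

(* Phi : A -> (A -> B) is a B-A-bimodule isomorphism
   A ~= _beta Hom_B(A_B, B_B), where (b . chi . a)(x) = beta(b) chi(a x). *)
Definition bimod_iso (beta : B -> B) (Phi : A -> A -> B) : Prop :=
  (forall a, right_Blinear (Phi a)) /\
  (forall a a' x, Phi (a + a') x = Phi a x + Phi a' x) /\
  (forall b a a' x, Phi (iota b * a * a') x = beta b * Phi a (a' * x)) /\
  (forall a a', (forall x, Phi a x = Phi a' x) -> a = a') /\
  (forall chi : A -> B, right_Blinear chi -> exists a, forall x, chi x = Phi a x).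

Definition beta_frobenius_ext (beta : B -> B) : Prop :=
  kalg_automorphism beta /\ right_fg_projective /\
  exists Phi : A -> A -> B, bimod_iso beta Phi.

Definition beta_frobenius_hom (beta : B -> B) (F : A -> B) : Prop :=
  bimod_iso beta (fun a x => F (a * x)).

End FrobDefs.

(** The functional [F] is characterised by [psi (F a * v) = phi (a v)] for
    [v] in [B]; this single identity, together with the nondegeneracy of [phi]
    and [psi], yields that [a |-> F (a _)] is right [B]-linear, injective and
    hits every [chi] in [Hom_B(A_B, B_B)] (namely at [sum_i psi (chi x_i) y_i]),
    while the two Nakayama relations turn [F (b a)] into [eta_B (eta_A^-1 b) F a].
    Finite generation of [A_B] comes from [A] being finitely generated over [k]:
    starting from [0], a finite sum [P] of maps [a |-> e f(a)] is corrected one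
    generator [x_t] at a time by [P + S (id - P)], with [S] a dual-basis
    expansion of [x_t - P x_t], until [P] fixes all generators and so is the
    identity. *)
From HB Require Import structures.
From mathcomp Require Import all_boot all_order all_algebra.
Import GRing.Theory.
Local Open Scope ring_scope.
Set Implicit Arguments. Unset Strict Implicit.

Section FrobeniusForm.
Variables (k : comNzRingType) (A : algType k) (phi : A -> k) (n : nat) (x y : 'I_n -> A).
Hypothesis coords : frobenius_coords phi x y.

Lemma frob_formD a a' : phi (a + a') = phi a + phi a'.
Proof. by case: coords => [[]]. Qed.

Lemma frob_formZ c a : phi (c *: a) = c * phi a.
Proof. by case: coords => [[]]. Qed.

Lemma frob_form0 : phi 0 = 0.
Proof. by rewrite -(scale0r (0 : A)) frob_formZ mul0r. Qed.

Lemma frob_form_sum (I : Type) (r : seq I) (P : pred I) (F : I -> A) :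
  phi (\sum_(i <- r | P i) F i) = \sum_(i <- r | P i) phi (F i).
Proof. exact: (big_morph phi frob_formD frob_form0). Qed.

Lemma frob_coords_span a : exists c : 'I_n -> k, a = \sum_(i < n) c i *: x i.
Proof. by case: coords => _ [span _]; exists (fun i => phi (y i * a)). Qed.

Lemma frob_form_nondegl a a' : (forall v, phi (a * v) = phi (a' * v)) -> a = a'.
Proof.
move=> eq_phi; case: coords => _ [_ expand].
by rewrite -(expand a) -(expand a'); apply: eq_bigr => i _; rewrite eq_phi.
Qed.

Lemma frob_form_nondegr a a' : (forall v, phi (v * a) = phi (v * a')) -> a = a'.
Proof.
move=> eq_phi; case: coords => _ [expand _].
by rewrite -(expand a) -(expand a'); apply: eq_bigr => i _; rewrite eq_phi.
Qed.

Variable eta : A -> A.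
Hypothesis nak : nakayama phi eta.

Lemma nakayamaD a a' : eta (a + a') = eta a + eta a'.
Proof.
apply: frob_form_nondegl => v.
by rewrite nak mulrDl mulrDr !frob_formD !nak.
Qed.

Lemma nakayamaM a a' : eta (a * a') = eta a * eta a'.
Proof. by apply: frob_form_nondegl => v; rewrite nak -mulrA nak -mulrA nak mulrA. Qed.

Lemma nakayama1 : eta 1 = 1.
Proof. by apply: frob_form_nondegl => v; rewrite nak mul1r mulr1. Qed.

Lemma nakayamaZ c a : eta (c *: a) = c *: eta a.
Proof.
apply: frob_form_nondegl => v.
by rewrite nak -scalerAl -scalerAr !frob_formZ nak.
Qed.

Lemma nakayama_inj : injective eta.
Proof.
by move=> a a' eq_eta; apply: frob_form_nondegr => v; rewrite -(nak a) -(nak a') eq_eta.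
Qed.

Lemma nakayama_bij : bijective eta.
Proof.
exists (fun a => \sum_(i < n) phi (a * y i) *: x i) => a.
  case: coords => _ [expand _].
  by rewrite -[RHS]expand; apply: eq_bigr => i _; rewrite nak.
apply: frob_form_nondegl => v; case: coords => _ [_ expand].
rewrite nak mulr_sumr frob_form_sum -{2}(expand v) mulr_sumr frob_form_sum.
by apply: eq_bigr => i _; rewrite -!scalerAr !frob_formZ mulrC.
Qed.

Lemma nakayama_kalg_automorphism : kalg_automorphism eta.
Proof.
split; first exact: nakayama_bij.
split; first exact: nakayamaD.
split; first exact: nakayamaM.
by split; [exact: nakayama1 | exact: nakayamaZ].
Qed.

End FrobeniusForm.

Lemma kalg_automorphism_comp (k : comNzRingType) (B : algType k) (f g : B -> B) :
  kalg_automorphism f -> kalg_automorphism g -> kalg_automorphism (f \o g).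
Proof.
move=> [fbij [fD [fM [f1 fZ]]]] [gbij [gD [gM [g1 gZ]]]].
split; first exact: bij_comp.
split; first by move=> b b' /=; rewrite gD fD.
split; first by move=> b b' /=; rewrite gM fM.
by split=> [|c b] /=; rewrite ?g1 ?f1 // gZ fZ.
Qed.

Section RestrictedInverse.
Variables (k : comNzRingType) (A B : algType k) (iota : {lrmorphism B -> A}).
Variables (phi : A -> k) (n : nat) (x y : 'I_n -> A) (eta : A -> A) (gamma : B -> B).
Hypotheses (coords : frobenius_coords phi x y) (nak : nakayama phi eta).
Hypotheses (iota_inj : injective iota) (eta_stable : forall b, exists b', eta (iota b) = iota b').
Hypothesis gammaK : forall b, eta (iota (gamma b)) = iota b.

Lemma restricted_inverse_kalg_automorphism : kalg_automorphism gamma.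
Proof.
have eta_iota_inj c c' : eta (iota c) = eta (iota c') -> c = c'.
  by move/(nakayama_inj coords nak)/iota_inj.
have eta_stableb b : exists b', eta (iota b) == iota b'.
  by have [b' eq_b'] := eta_stable b; exists b'; apply/eqP.
pose delta b := xchoose (eta_stableb b).
have deltaE b : eta (iota b) = iota (delta b) by apply/eqP/(xchooseP (eta_stableb b)).
split.
  exists delta => b; first by apply: iota_inj; rewrite -deltaE gammaK.
  by apply: eta_iota_inj; rewrite gammaK deltaE.
split=> [b b'|].
  by apply: eta_iota_inj; rewrite rmorphD (nakayamaD coords nak) !gammaK rmorphD.
split=> [b b'|].
  by apply: eta_iota_inj; rewrite rmorphM (nakayamaM coords nak) !gammaK rmorphM.
split; first by apply: eta_iota_inj; rewrite gammaK rmorph1 (nakayama1 coords nak).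
by move=> c b; apply: eta_iota_inj; rewrite linearZ /= (nakayamaZ coords nak) !gammaK linearZ.
Qed.

End RestrictedInverse.

Section FiniteGeneration.
Variables (k : comNzRingType) (A B : algType k) (iota : {lrmorphism B -> A}).

Lemma right_Blinear0 f : right_Blinear iota f -> f 0 = 0.
Proof. by case=> fD _; apply: (@addrI _ (f 0)); rewrite -fD !addr0. Qed.

Lemma right_Blinear_comp f h :
  right_Blinear iota f ->
  (forall a a', h (a + a') = h a + h a') ->
  (forall a b, h (a * iota b) = h a * iota b) ->
  right_Blinear iota (f \o h).
Proof. by move=> [fD fM] hD hM; split=> * /=; rewrite ?hD ?hM ?fD ?fM. Qed.

Definition factors_through_free (P : A -> A) : Prop :=
  exists (n : nat) (e : 'I_n -> A) (f : 'I_n -> A -> B),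
    (forall i, right_Blinear iota (f i)) /\
    (forall a, P a = \sum_(i < n) e i * iota (f i a)).

Section FactorsThroughFree.
Variable P : A -> A.
Hypothesis freeP : factors_through_free P.

Lemma factors_through_freeD a a' : P (a + a') = P a + P a'.
Proof.
have [n [e [f [f_lin P_def]]]] := freeP; rewrite !P_def -big_split /=.
by apply: eq_bigr => i _; case: (f_lin i) => fD _; rewrite fD rmorphD mulrDr.
Qed.

Lemma factors_through_free0 : P 0 = 0.
Proof. by apply: (@addrI _ (P 0)); rewrite -factors_through_freeD !addr0. Qed.

Lemma factors_through_freeMr a b : P (a * iota b) = P a * iota b.
Proof.
have [n [e [f [f_lin P_def]]]] := freeP; rewrite !P_def mulr_suml.
by apply: eq_bigr => i _; case: (f_lin i) => _ fM; rewrite fM rmorphM mulrA.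
Qed.

Lemma factors_through_freeZ c a : P (c *: a) = c *: P a.
Proof.
by rewrite -mulr_algr -(rmorph_alg iota) factors_through_freeMr rmorph_alg mulr_algr.
Qed.

Lemma factors_through_free_sum (I : Type) (r : seq I) (F : I -> A) :
  P (\sum_(i <- r) F i) = \sum_(i <- r) P (F i).
Proof. exact: (big_morph P factors_through_freeD factors_through_free0). Qed.

End FactorsThroughFree.

Lemma factors_through_free_add P Q :
  factors_through_free P -> factors_through_free Q ->
  factors_through_free (fun a => P a + Q a).
Proof.
move=> [n1 [e1 [f1 [f1_lin P_def]]]] [n2 [e2 [f2 [f2_lin Q_def]]]].
pose glue T (t1 : 'I_n1 -> T) (t2 : 'I_n2 -> T) (i : 'I_(n1 + n2)) :=
  match split i with inl j => t1 j | inr j => t2 j end.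
have glue_lshift T t1 t2 j : glue T t1 t2 (lshift n2 j) = t1 j.
  by rewrite /glue (unsplitK (inl _ : 'I_n1 + 'I_n2)).
have glue_rshift T t1 t2 j : glue T t1 t2 (rshift n1 j) = t2 j.
  by rewrite /glue (unsplitK (inr _ : 'I_n1 + 'I_n2)).
exists (n1 + n2)%N, (glue _ e1 e2), (glue _ f1 f2); split.
  by move=> i; rewrite /glue; case: split.
by move=> a; rewrite big_split_ord P_def Q_def /=; congr (_ + _);
  apply: eq_bigr => j _; rewrite ?glue_lshift ?glue_rshift.
Qed.

Lemma factors_through_free_comp P h :
  factors_through_free P ->
  (forall a a', h (a + a') = h a + h a') ->
  (forall a b, h (a * iota b) = h a * iota b) ->
  factors_through_free (P \o h).
Proof.
move=> [n [e [f [f_lin P_def]]]] hD hM.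
exists n, e, (fun i => f i \o h); split=> [i|a]; last exact: P_def.
exact: right_Blinear_comp.
Qed.

Lemma factors_through_free_dual_sum (I : Type) (e : I -> A) (f : I -> A -> B) (s : seq I) :
  (forall i, right_Blinear iota (f i)) ->
  factors_through_free (fun a => \sum_(i <- s) e i * iota (f i a)).
Proof.
move=> f_lin; exists (size s), (e \o tnth (in_tuple s)), (f \o tnth (in_tuple s)).
by split=> [i|a]; [exact: f_lin | rewrite big_tnth].
Qed.

Lemma right_fg_projective_of_span (n : nat) (x : 'I_n -> A) :
  (forall a, exists c : 'I_n -> k, a = \sum_(i < n) c i *: x i) ->
  right_projective iota -> right_fg_projective iota.
Proof.
move=> span [I [e [f [f_lin dual_basis]]]].
have fix_first t : exists P, factors_through_free P /\
    forall i : 'I_n, (i < t)%N -> P (x i) = x i.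
  elim: t => [|t [P [freeP P_fix]]].
    exists (fun=> 0); split=> //; exists 0%N, (fun=> 0), (fun _ _ => 0).
    by split=> [[] // | a]; rewrite big_ord0.
  have [lt_tn|le_nt] := ltnP t n; last first.
    by exists P; split=> // i lt_it; apply: P_fix; apply: leq_trans le_nt.
  pose xt := x (Ordinal lt_tn).
  have [s [_ xt_dual]] := dual_basis (xt - P xt).
  exists (fun a => P a + \sum_(i <- s) e i * iota (f i (a - P a))); split.
    apply: factors_through_free_add => //.
    apply: (factors_through_free_comp (factors_through_free_dual_sum e s f_lin)).
      by move=> a a'; rewrite (factors_through_freeD freeP) opprD addrACA.
    by move=> a b; rewrite (factors_through_freeMr freeP) mulrBl.
  move=> i; rewrite ltnS leq_eqVlt => /orP[/eqP i_t | lt_it].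
    have -> : i = Ordinal lt_tn by exact: val_inj.
    by rewrite -/xt -xt_dual addrC subrK.
  rewrite P_fix // subrr big1 ?addr0 // => j _.
  by rewrite (right_Blinear0 (f_lin j)) rmorph0 mulr0.
have [P [freeP P_fix]] := fix_first n.
have P_id a : P a = a.
  have [c ->] := span a; rewrite (factors_through_free_sum freeP).
  by apply: eq_bigr => i _; rewrite (factors_through_freeZ freeP) P_fix.
have [m [e' [f' [f'_lin P_def]]]] := freeP.
by exists m, e', f'; split=> // a; rewrite -P_def P_id.
Qed.

End FiniteGeneration.

Section FrobeniusHom.
Variables (k : comNzRingType) (A B : algType k) (iota : {lrmorphism B -> A}).
Variables (phi : A -> k) (n : nat) (x y : 'I_n -> A).
Variables (psi : B -> k) (m : nat) (z w : 'I_m -> B).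
Variables (etaA : A -> A) (etaB : B -> B) (gamma : B -> B).
Hypotheses (coordsA : frobenius_coords phi x y) (coordsB : frobenius_coords psi z w).
Hypotheses (nakA : nakayama phi etaA) (nakB : nakayama psi etaB).
Hypothesis gammaK : forall b, etaA (iota (gamma b)) = iota b.

Definition frob_hom (a : A) : B := \sum_(j < m) phi (a * iota (z j)) *: w j.

Lemma psi_frob_hom a v : psi (frob_hom a * v) = phi (a * iota v).
Proof.
case: coordsB => _ [expand _].
rewrite mulr_suml (frob_form_sum coordsB) -[v in RHS]expand linear_sum mulr_sumr.
rewrite (frob_form_sum coordsA); apply: eq_bigr => j _.
by rewrite -scalerAl (frob_formZ coordsB) linearZ -scalerAr (frob_formZ coordsA) mulrC.
Qed.

Lemma frob_homD a a' : frob_hom (a + a') = frob_hom a + frob_hom a'.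
Proof.
rewrite -big_split; apply: eq_bigr => j _.
by rewrite mulrDl (frob_formD coordsA) scalerDl.
Qed.

Lemma frob_homMr a b : frob_hom (a * iota b) = frob_hom a * b.
Proof.
apply: (frob_form_nondegl coordsB) => v.
by rewrite -[_ * b * v]mulrA !psi_frob_hom rmorphM mulrA.
Qed.

Lemma frob_homMl a b : frob_hom (iota b * a) = etaB (gamma b) * frob_hom a.
Proof.
apply: (frob_form_nondegl coordsB) => v.
rewrite -[_ * frob_hom a * v]mulrA nakB -mulrA !psi_frob_hom rmorphM mulrA.
by rewrite -(nakA (iota (gamma b))) gammaK mulrA.
Qed.

Lemma frob_hom_nondeg a a' : (forall v, frob_hom (a * v) = frob_hom (a' * v)) -> a = a'.
Proof.
move=> eq_F; apply: (frob_form_nondegl coordsA) => v.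
by rewrite -[a * v]mulr1 -[a' * v]mulr1 -(rmorph1 iota) -!psi_frob_hom eq_F.
Qed.

Lemma frob_hom_surj chi : right_Blinear iota chi ->
  exists a, forall v, chi v = frob_hom (a * v).
Proof.
move=> chi_lin; have [chiD chiM] := chi_lin.
exists (\sum_(i < n) psi (chi (x i)) *: y i) => v.
apply: (frob_form_nondegl coordsB) => b.
case: coordsA => _ [expand _].
rewrite psi_frob_hom -chiM -mulrA -{1}(expand (v * iota b)).
rewrite (big_morph chi chiD (right_Blinear0 chi_lin)) (frob_form_sum coordsB).
rewrite mulr_suml (frob_form_sum coordsA); apply: eq_bigr => i _.
rewrite -mulr_algr -(rmorph_alg iota) chiM mulr_algr (frob_formZ coordsB).
by rewrite -scalerAl (frob_formZ coordsA) mulrC.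
Qed.

Lemma frob_hom_beta_frobenius : beta_frobenius_hom iota (etaB \o gamma) frob_hom.
Proof.
split; first by move=> a; split=> [v v'|v b]; rewrite ?mulrDr ?frob_homD // mulrA frob_homMr.
split; first by move=> a a' v; rewrite mulrDl frob_homD.
split; first by move=> b a a' v; rewrite -!mulrA frob_homMl.
by split; [exact: frob_hom_nondeg | exact: frob_hom_surj].
Qed.

End FrobeniusHom.

Unset Implicit Arguments. Set Strict Implicit.

Theorem mainTheorem13 (k : comNzRingType) (A B : algType k)
    (iota : {lrmorphism B -> A})
    (phi : A -> k) (n : nat) (x y : 'I_n -> A)
    (psi : B -> k) (m : nat) (z w : 'I_m -> B)
    (etaA : A -> A) (etaB : B -> B) :
  frobenius_coords phi x y ->
  frobenius_coords psi z w ->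
  injective iota ->
  right_projective iota ->
  nakayama phi etaA ->
  nakayama psi etaB ->
  (* eta_A(B) = B *)
  (forall b : B, exists b' : B, etaA (iota b) = iota b') ->
  (forall b' : B, exists b : B, etaA (iota b) = iota b') ->
  (* gamma = eta_A^{-1} restricted to B *)
  forall gamma : B -> B, (forall b, etaA (iota (gamma b)) = iota b) ->
  beta_frobenius_ext iota (etaB \o gamma) /\
  beta_frobenius_hom iota (etaB \o gamma)
    (fun a : A => \sum_(j < m) phi (a * iota (z j)) *: w j).
Proof.
move=> coordsA coordsB iota_inj projA nakA nakB eta_stable _ gamma gammaK.
have F_iso := frob_hom_beta_frobenius coordsA coordsB nakA nakB gammaK.
split=> //; split.
  apply: kalg_automorphism_comp; first exact: (nakayama_kalg_automorphism coordsB nakB).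
  exact: (restricted_inverse_kalg_automorphism coordsA nakA iota_inj eta_stable gammaK).
split; last by exists (fun a v => frob_hom iota phi z w (a * v)).
exact: (right_fg_projective_of_span (frob_coords_span coordsA) projA).
Qed.
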